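(* Let $X$ be a Polish space and let $c:X\times X\to[0,\infty)$ be a continuous bounded function with $c(x,y)=c(y,x)$ for all $x,y\in X$. For $Q\in\mathcal M(X)$ define $K(Q):=\int_{X\times X}c(x,y)\,dQ(x)\,dQ(y)$. Then: (i) $c$ is positive definite if and only if $K$ is convex on $\mathcal M(X)$; (ii) $c$ is balanced positive definite if and only if $K$ is convex on $\mathcal P(X)$.
   Context: $\mathcal M(X)$ denotes the set of finite (nonnegative) Borel measures on $X$ and $\mathcal P(X)$ the set of Borel probability measures on $X$. A symmetric function $c:X\times X\to[0,\infty)$ is positive definite if for all $n$, all distinct points $x_1,\ldots,x_n\in X$ and all real numbers $a_1,\ldots,a_n$ one has $\sum_{i,j=1}^n c(x_i,x_j)a_ia_j\ge 0$. It is balanced positive definite if for all $n$, all distinct $x_1,\ldots,x_n\in X$ and all real $a_1,\ldots,a_n$ with $\sum_{i=1}^n a_i=0$ one has $\sum_{i,j=1}^n c(x_i,x_j)a_ia_j\ge0$. *)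

From HB Require Import structures.
From mathcomp Require Import all_boot all_order all_algebra.
From mathcomp Require Import all_classical all_reals all_analysis.
Set Implicit Arguments. Unset Strict Implicit. Unset Printing Implicit Defensive.
Import Order.TTheory GRing.Theory Num.Theory.
Import numFieldNormedType.Exports.
Local Open Scope classical_set_scope.
Local Open Scope ring_scope.

Definition separable_space (X : topologicalType) : Prop :=
  exists D : set X, countable D /\ dense D.

Definition is_metric (R : realType) (X : Type) (d : X -> X -> R) : Prop :=
  [/\ forall x y, 0 <= d x y,
      forall x y, d x y = 0 <-> x = y,
      forall x y, d x y = d y x &
      forall x y z, d x z <= d x y + d y z].

Definition d_cauchy (R : realType) (X : Type) (d : X -> X -> R)
  (u : nat -> X) : Prop :=
  forall e : R, 0 < e -> exists N : nat,
    forall m n : nat, (N <= m)%N -> (N <= n)%N -> d (u m) (u n) < e.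

Definition completely_metrizable (R : realType) (X : topologicalType) : Prop :=
  exists d : X -> X -> R,
    [/\ is_metric d,
        (forall A : set X, open A <->
           (forall x, A x -> exists2 e : R, 0 < e & [set y | d x y < e] `<=` A)) &
        (forall u : nat -> X, d_cauchy d u -> exists l : X, u @ \oo --> l)].

Definition polish_space (R : realType) (X : topologicalType) : Prop :=
  separable_space X /\ completely_metrizable R X.

Notation borel X := (g_sigma_algebraType (@open X)).

Definition positive_definite (R : realType) (X : Type) (c : X -> X -> R) : Prop :=
  forall (n : nat) (x : 'I_n -> X), injective x ->
  forall a : 'I_n -> R,
    0 <= \sum_(i < n) \sum_(j < n) c (x i) (x j) * a i * a j.

Definition balanced_positive_definite (R : realType) (X : Type)
  (c : X -> X -> R) : Prop :=
  forall (n : nat) (x : 'I_n -> X), injective x ->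
  forall a : 'I_n -> R, \sum_(i < n) a i = 0 ->
    0 <= \sum_(i < n) \sum_(j < n) c (x i) (x j) * a i * a j.

Definition Kfun (R : realType) (X : ptopologicalType) (c : X -> X -> R)
  (Q : {measure set (borel X) -> \bar R}) : \bar R :=
  (\int[Q]_x \int[Q]_y (c x y)%:E)%E.

Definition K_convex_on_finite_measures (R : realType) (X : ptopologicalType)
  (c : X -> X -> R) : Prop :=
  forall (Q1 Q2 Q : {finite_measure set (borel X) -> \bar R}) (t : R),
    0 <= t <= 1 ->
    (forall A : set (borel X), measurable A ->
       Q A = (t%:E * Q1 A + (1 - t)%:E * Q2 A)%E) ->
    (Kfun c Q <= t%:E * Kfun c Q1 + (1 - t)%:E * Kfun c Q2)%E.

Definition K_convex_on_probabilities (R : realType) (X : ptopologicalType)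
  (c : X -> X -> R) : Prop :=
  forall (Q1 Q2 Q : probability (borel X) R) (t : R),
    0 <= t <= 1 ->
    (forall A : set (borel X), measurable A ->
       Q A = (t%:E * Q1 A + (1 - t)%:E * Q2 A)%E) ->
    (Kfun c Q <= t%:E * Kfun c Q1 + (1 - t)%:E * Kfun c Q2)%E.

(* Write B(P, P') for the iterated integral of c against P and P'.  Expanding
   K(t Q1 + (1 - t) Q2) gives
     t K(Q1) + (1 - t) K(Q2) - K(t Q1 + (1 - t) Q2) = t (1 - t) D(Q1, Q2),
   where D(Q1, Q2) = B(Q1,Q1) + B(Q2,Q2) - B(Q1,Q2) - B(Q2,Q1) is the energy of
   the signed measure Q1 - Q2; so convexity of K amounts to D >= 0.  For
   Q_k = sum_i w_k(i) delta_(x_i), D is the quadratic form of c at (x_i) with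
   weights w_1 - w_2, and every (balanced) weight vector arises in this way from
   finite (probability) measures; this gives convexity => positive definiteness.
   Conversely, sending every point to its nearest point among the first n terms
   of a dense sequence turns D into such a quadratic form, with the masses of the
   nearest-point cells as weights (balanced when Q1 and Q2 have equal mass), and
   by continuity and boundedness of c these forms converge to D by dominated
   convergence.  The same discretization shows that x |-> int c(x, y) dQ(y) is
   Borel measurable, which makes K well defined without any measurability of c
   on the product space. *)

From HB Require Import structures.
From mathcomp Require Import all_boot all_order all_algebra.
From mathcomp Require Import all_classical all_reals all_analysis.
From mathcomp Require Import lebesgue_measure measurable_realfun lra ring.
Set Implicit Arguments. Unset Strict Implicit. Unset Printing Implicit Defensive.
Import Order.TTheory GRing.Theory Num.Theory.
Import numFieldNormedType.Exports.
Local Open Scope classical_set_scope.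
Local Open Scope ring_scope.

Section bilinear_form.
Variable R : comRingType.

Definition bform n (C : 'I_n -> 'I_n -> R) (u v : 'I_n -> R) : R :=
  \sum_i \sum_j C i j * u i * v j.

Lemma bformBB n (C : 'I_n -> 'I_n -> R) (u v : 'I_n -> R) :
  bform C (fun i => u i - v i) (fun i => u i - v i) =
  bform C u u + bform C v v - bform C u v - bform C v u.
Proof.
rewrite /bform -big_split /= -!sumrB; apply: eq_bigr => i _.
rewrite -big_split /= -!sumrB; apply: eq_bigr => j _; ring.
Qed.

Lemma bformZZ n (C : 'I_n -> 'I_n -> R) (k : R) (u : 'I_n -> R) :
  bform C (fun i => k * u i) (fun i => k * u i) = k ^+ 2 * bform C u u.
Proof.
rewrite /bform big_distrr; apply: eq_bigr => i _.
rewrite big_distrr; apply: eq_bigr => j _ /=; ring.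
Qed.

Lemma bform_partition n k (p : 'I_n -> 'I_k) (G : 'I_k -> 'I_k -> R)
    (a b : 'I_n -> R) :
  bform (fun i j => G (p i) (p j)) a b =
  bform G (fun u => \sum_(i | p i == u) a i) (fun v => \sum_(j | p j == v) b j).
Proof.
transitivity (\sum_i \sum_v \sum_(j | p j == v) G (p i) v * a i * b j).
  apply: eq_bigr => i _; rewrite (partition_big p xpredT) //=.
  by apply: eq_bigr => v _; apply: eq_bigr => j /eqP ->.
rewrite (partition_big p xpredT) //=; apply: eq_bigr => u _.
transitivity (\sum_(i | p i == u) \sum_v \sum_(j | p j == v) G u v * a i * b j).
  by apply: eq_bigr => i /eqP ->.
rewrite exchange_big /=; apply: eq_bigr => v _.
rewrite -mulrA big_distrl /= big_distrr /=; apply: eq_bigr => i _.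
rewrite !big_distrr /=; apply: eq_bigr => j _; ring.
Qed.

End bilinear_form.

Section psd_kernel.
Variables (R : numDomainType) (T : eqType) (P : R -> Prop) (c : T -> T -> R).

Definition psd_kernel := forall n (x : 'I_n -> T) (a : 'I_n -> R),
  P (\sum_i a i) -> 0 <= bform (fun i j => c (x i) (x j)) a a.

Lemma psd_kernel_injective :
  (forall n (x : 'I_n -> T), injective x -> forall a : 'I_n -> R,
     P (\sum_i a i) -> 0 <= bform (fun i j => c (x i) (x j)) a a) ->
  psd_kernel.
Proof.
move=> hinj [|n] x a ha; first by rewrite /bform big_ord0.
pose s := undup [seq x i | i <- enum 'I_n.+1].
have xs i : (index (x i) s < size s)%N.
  by rewrite index_mem mem_undup; apply: map_f; rewrite mem_enum.
pose p i : 'I_(size s) := Ordinal (xs i).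
pose y (u : 'I_(size s)) := nth (x ord0) s u.
have yp i : y (p i) = x i by rewrite /y /= nth_index // -index_mem.
have y_inj : injective y.
  by move=> u v /eqP; rewrite /y nth_uniq ?undup_uniq // => /eqP/val_inj.
have -> : bform (fun i j => c (x i) (x j)) a a =
          bform (fun i j => c (y (p i)) (y (p j))) a a.
  by apply: eq_bigr => i _; apply: eq_bigr => j _; rewrite !yp.
rewrite (bform_partition p (fun u v => c (y u) (y v))); apply: hinj => //.
by rewrite (partition_big p xpredT) in ha.
Qed.

End psd_kernel.

Lemma positive_definite_psd (R : realType) (T : eqType) (c : T -> T -> R) :
  positive_definite c -> psd_kernel (fun _ => True) c.
Proof. by move=> hpd; apply: psd_kernel_injective => n x x_inj a _; exact: hpd. Qed.

Lemma balanced_positive_definite_psd (R : realType) (T : eqType)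
    (c : T -> T -> R) :
  balanced_positive_definite c -> psd_kernel (eq^~ 0) c.
Proof. by move=> hpd; apply: psd_kernel_injective; exact: hpd. Qed.

Lemma max0_sub_max0N (R : realDomainType) (x : R) :
  Num.max x 0 - Num.max (- x) 0 = x.
Proof.
have [x0|x0] := leP 0 x.
  by rewrite (max_idPr _) ?subr0 // oppr_le0.
by rewrite (max_idPl _) ?sub0r ?opprK // oppr_ge0 ltW.
Qed.

Section dirac_sum.
Context d (T : measurableType d) (R : realType) (n : nat) (x : 'I_n -> T).
Local Open Scope ereal_scope.

(* The weights enter through their absolute values so that this is a measure
   for every [w]. *)
Definition dirac_sum (w : 'I_n -> R) (A : set T) : \bar R :=
  \sum_(i < n) ((`|w i|)%:E * \d_(x i) A).

Section measure.
Variable w : 'I_n -> R.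

Let dirac_sum0 : dirac_sum w set0 = 0.
Proof. by rewrite /dirac_sum big1 // => i _; rewrite dirac0 mule0. Qed.

Let dirac_sum_ge0 A : 0 <= dirac_sum w A.
Proof. by apply: sume_ge0 => i _; rewrite mule_ge0. Qed.

Let dirac_sum_sigma_additive : semi_sigma_additive (dirac_sum w).
Proof.
move=> F mF tF mUF; rewrite [X in _ --> X](_ : _ =
    lim ((fun n => \sum_(0 <= i < n) dirac_sum w (F i)) @ \oo)).
  by apply: is_cvg_ereal_nneg_natsum => k _; exact: dirac_sum_ge0.
rewrite nneseries_sum//; last by move=> i j _; rewrite mule_ge0.
apply: eq_bigr => /= i _.
exact: (measure_semi_bigcup (mscale (NngNum (normr_ge0 (w i))) \d_(x i))).
Qed.

HB.instance Definition _ := isMeasure.Build _ _ _ (dirac_sum w)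
  dirac_sum0 dirac_sum_ge0 dirac_sum_sigma_additive.

Lemma dirac_sumE A :
  dirac_sum w A = (\sum_(i < n) `|w i| * (x i \in A)%:R)%R%:E.
Proof. by rewrite -sumEFin; apply: eq_bigr => i _; rewrite diracE -EFinM. Qed.

Let dirac_sum_fin : fin_num_fun (dirac_sum w).
Proof. by move=> A _; rewrite dirac_sumE. Qed.

HB.instance Definition _ := Measure_isFinite.Build _ _ _ (dirac_sum w)
  dirac_sum_fin.

Lemma ge0_dirac_sum_setT : (forall i, 0 <= w i)%R ->
  dirac_sum w setT = (\sum_(i < n) w i)%R%:E.
Proof.
move=> w_ge0; rewrite dirac_sumE; congr EFin; apply: eq_bigr => i _.
by rewrite in_setT mulr1 ger0_norm.
Qed.

Lemma integral_dirac_sum (f : T -> \bar R) :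
  measurable_fun [set: T] f -> (forall t, 0 <= f t) ->
  \int[dirac_sum w]_t f t = \sum_(i < n) (`|w i|)%:E * f (x i).
Proof.
move=> mf f0; pose m_ : {measure set T -> \bar R}^nat := fun k =>
  if insub k is Some i
  then mscale (NngNum (normr_ge0 (w i))) \d_(x i) else mzero.
rewrite (eq_measure_integral (msum m_ n)); last first.
  by move=> A mA _; apply: eq_bigr => i _; rewrite /m_ valK.
rewrite ge0_integral_measure_sum//; apply: eq_bigr => i _.
by rewrite /m_ valK ge0_integral_mscale//= integral_dirac// diracT mul1e.
Qed.

Definition dirac_sum_probability (mass1 : dirac_sum w setT = 1) :
  probability T R :=
  HB.pack (dirac_sum w) (Measure_isProbability.Build _ _ _ (dirac_sum w) mass1).

End measure.

Lemma dirac_sum_mixture (w1 w2 : 'I_n -> R) (t : R) :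
  (forall i, 0 <= w1 i)%R -> (forall i, 0 <= w2 i)%R -> (0 <= t <= 1)%R ->
  forall A, dirac_sum (fun i => t * w1 i + (1 - t) * w2 i)%R A =
            t%:E * dirac_sum w1 A + (1 - t)%:E * dirac_sum w2 A.
Proof.
move=> w1_ge0 w2_ge0 /andP[t0 t1] A; rewrite !dirac_sumE -!EFinM -EFinD; congr EFin.
have t1' : (0 <= 1 - t)%R by rewrite subr_ge0.
rewrite !big_distrr -big_split /=; apply: eq_bigr => i _.
rewrite !ger0_norm ?addr_ge0 ?mulr_ge0 //; ring.
Qed.

End dirac_sum.

Lemma ge0_integral_mixture d (T : measurableType d) (R : realType)
    (Q1 Q2 Q : {measure set T -> \bar R}) (t : R) :
  (0 <= t <= 1)%R ->
  (forall A, measurable A -> Q A = (t%:E * Q1 A + (1 - t)%:E * Q2 A)%E) ->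
  forall f : T -> \bar R, measurable_fun [set: T] f -> (forall x, 0 <= f x)%E ->
  (\int[Q]_x f x = t%:E * \int[Q1]_x f x + (1 - t)%:E * \int[Q2]_x f x)%E.
Proof.
move=> /andP[t0 t1] hQ f mf f0.
have t1' : (0 <= 1 - t)%R by rewrite subr_ge0.
pose m_ : {measure set T -> \bar R}^nat := fun k =>
  if k is 0%N then mscale (NngNum t0) Q1 else mscale (NngNum t1') Q2.
rewrite (eq_measure_integral (msum m_ 2)); last first.
  by move=> A mA _; rewrite hQ // /= /msum /= !big_ord_recl big_ord0 adde0.
rewrite ge0_integral_measure_sum// !big_ord_recl big_ord0 adde0 /=.
by rewrite !ge0_integral_mscale.
Qed.

Lemma measurable_set_of_prop d (T : measurableType d) (P : Prop) :
  measurable [set _ : T | P].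
Proof.
have [p|np] := pselect P.
  by rewrite (_ : [set _ | P] = setT) //; apply/seteqP; split.
by rewrite (_ : [set _ | P] = set0) //; apply/seteqP; split.
Qed.

Lemma ge0_integral_le_cst d (T : measurableType d) (R : realType)
    (P : {measure set T -> \bar R}) (f : T -> \bar R) (b : \bar R) :
  measurable_fun [set: T] f -> (forall y, 0 <= f y <= b)%E ->
  (\int[P]_y f y <= b * P setT)%E.
Proof.
move=> mf fb; rewrite -integral_cst //.
by apply: ge0_le_integral => // y _; case/andP: (fb y).
Qed.

Section separable_metric_space.
Context (R : realType) (X : ptopologicalType) (dist : X -> X -> R) (e : nat -> X).
Hypothesis dist_metric : is_metric dist.
Hypothesis open_dist : forall A : set X, open A <->
  (forall x, A x -> exists2 r : R, 0 < r & [set y | dist x y < r] `<=` A).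
Hypothesis dense_seq : forall x (r : R), 0 < r -> exists m, dist x (e m) < r.

Local Notation T := (borel X).

Lemma open_dist_lt a b : open [set x | dist x a < dist x b].
Proof.
have [_ _ dsym dtri] := dist_metric.
apply/open_dist => x /= hx; exists ((dist x b - dist x a) / 2).
  by rewrite divr_gt0 // subr_gt0.
move=> y /= hy; have := dtri y x a; have := dtri x y b; rewrite (dsym y x).
lra.
Qed.

Fixpoint nearest_index (n : nat) (x : X) : nat :=
  if n is n'.+1 then
    (if dist x (e n) < dist x (e (nearest_index n' x)) then n else nearest_index n' x)
  else 0%N.

Definition nearest_point n x := e (nearest_index n x).

Lemma nearest_index_le n x : (nearest_index n x <= n)%N.
Proof. by elim: n => //= n ih; case: ifP => // _; exact: leqW. Qed.

Lemma nearest_point_min n x m :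
  (m <= n)%N -> dist x (nearest_point n x) <= dist x (e m).
Proof.
rewrite /nearest_point; elim: n m => [|n ih] m; first by rewrite leqn0 => /eqP ->.
rewrite leq_eqVlt => /orP[/eqP ->|hm] /=.
  by case: ifPn => [_|]; [exact: lexx | rewrite -leNgt].
case: ifPn => h; last exact: ih.
by apply/ltW/(lt_le_trans h)/ih.
Qed.

Lemma nearest_point_cvg x : nearest_point n x @[n --> \oo] --> x.
Proof.
move=> A; rewrite nbhsE => -[B [oB Bx] BA].
have [r r0 rB] := (open_dist B).1 oB x Bx.
have [m hm] := dense_seq x r0.
exists m => // k /= mk.
by apply: BA; apply: rB => /=; exact: (le_lt_trans (nearest_point_min x mk) hm).
Qed.

Lemma measurable_nearest_index_eq n m :
  measurable ([set x | nearest_index n x = m] : set T).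
Proof.
elim: n m => [|n ih] m; first exact: (@measurable_set_of_prop _ T (0%N = m)).
pose S := \bigcup_k ([set x | nearest_index n x = k] `&`
                     [set x | dist x (e n.+1) < dist x (e k)]).
have mS : measurable (S : set T).
  apply: bigcupT_measurable => k; apply: measurableI; first exact: ih.
  by apply: sub_sigma_algebra; exact: open_dist_lt.
rewrite (_ : [set x | _] =
    (S `&` [set _ | n.+1 = m]) `|` (~` S `&` [set x | nearest_index n x = m])).
  apply: measurableU; apply: measurableI => //.
    exact: (@measurable_set_of_prop _ T).
  exact: measurableC.
apply/seteqP; split => x /=.
  case: ifPn => h hm; first by left; split => //; exists (nearest_index n x).
  by right; split => // -[k _ [/= hk hlt]]; move: h; rewrite hk hlt.
case=> -[hS hm].
  by case: hS => k _ /= [-> ->]; rewrite hm.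
by case: ifPn => h //; exfalso; apply: hS; exists (nearest_index n x).
Qed.

Lemma measurable_fun_nearest_index d' (T' : measurableType d') n (h : nat -> T') :
  measurable_fun [set: T] (fun x => h (nearest_index n x)).
Proof.
move=> _ Y mY; rewrite setTI.
rewrite (_ : _ @^-1` _ =
    \bigcup_k ([set x | nearest_index n x = k] `&` [set _ | Y (h k)])).
  apply: bigcupT_measurable => k.
  apply: measurableI; first exact: measurable_nearest_index_eq.
  exact: (@measurable_set_of_prop _ T).
apply/seteqP; split => x /=; first by move=> hx; exists (nearest_index n x).
by case=> k _ [/= ->].
Qed.

Local Open Scope ereal_scope.

Lemma integral_nearest_index (P : {measure set T -> \bar R}) n (h : nat -> \bar R) :
  (forall m, 0 <= h m) ->
  \int[P]_x h (nearest_index n x) =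
  \sum_(m < n.+1) h m * P [set x | nearest_index n x = m].
Proof.
move=> h0; have mI m : measurable_fun [set: T]
    (fun x => (\1_[set x : T | nearest_index n x = m] x)%:E).
  apply/measurable_EFinP; apply: measurable_indic.
  exact: measurable_nearest_index_eq.
transitivity (\int[P]_x \sum_(m < n.+1)
                 h m * (\1_[set x | nearest_index n x = m] x)%:E).
  apply: eq_integral => x _.
  rewrite (bigD1 (Ordinal (nearest_index_le n x : (nearest_index n x < n.+1)%N)))//=.
  rewrite indicE mem_set// mule1 big1 ?adde0 // => i /negbTE hi.
  by rewrite indicE memNset ?mule0 // => /= hix; rewrite -val_eqE /= hix eqxx in hi.
rewrite ge0_integral_sum //; last 2 first.
- by move=> m; exact: measurable_funeM.
- by move=> m x _; rewrite mule_ge0// lee_fin.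
apply: eq_bigr => m _; rewrite ge0_integralZl //.
by rewrite integral_indic ?setIT //; exact: (measurable_nearest_index_eq n m).
Qed.

Section kernel.
Variables (c : X -> X -> R) (M : R).
Hypothesis c_cont : continuous (fun p : X * X => c p.1 p.2).
Hypothesis c_le : forall x y, (c x y <= M)%R.
Hypothesis c_ge0 : forall x y, (0 <= c x y)%R.

Lemma kernel_nearest_point_cvg x y :
  (c (nearest_point n x) (nearest_point n y))%:E @[n --> \oo] --> (c x y)%:E.
Proof.
apply: cvg_EFin; first exact: nearW.
have hxy : (nearest_point n x, nearest_point n y) @[n --> \oo] --> (x, y).
  by apply: cvg_pair; exact: nearest_point_cvg.
exact: (cvg_comp _ _ hxy (@c_cont (x, y))).
Qed.

Lemma measurable_kernel x : measurable_fun [set: T] (fun y => (c x y)%:E).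
Proof.
apply: (emeasurable_fun_cvg
  (fun n (y : T) => (c (nearest_point n x) (nearest_point n y))%:E)).
  by move=> n; exact: (measurable_fun_nearest_index n
    (fun m => (c (nearest_point n x) (e m))%:E)).
by move=> y _; exact: kernel_nearest_point_cvg.
Qed.

Lemma kernel_integral_nearest_point_cvg (P : {finite_measure set T -> \bar R}) x :
  \int[P]_y (c (nearest_point n x) (nearest_point n y))%:E @[n --> \oo] -->
  \int[P]_y (c x y)%:E.
Proof.
apply: (@dominated_cvg _ _ _ P setT _
  (fun n y => (c (nearest_point n x) (nearest_point n y))%:E) _ (cst M%:E)) => //.
- by move=> n; exact: (measurable_fun_nearest_index n
    (fun m => (c (nearest_point n x) (e m))%:E)).
- by move=> y _; exact: kernel_nearest_point_cvg.
- exact: finite_measure_integrable_cst.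
- by move=> n y _; rewrite gee0_abs ?lee_fin.
Qed.

Lemma measurable_kernel_integral (P : {finite_measure set T -> \bar R}) :
  measurable_fun [set: T] (fun x => \int[P]_y (c x y)%:E).
Proof.
apply: (emeasurable_fun_cvg
  (fun n (x : T) => \int[P]_y (c (nearest_point n x) (nearest_point n y))%:E)).
  by move=> n; exact: (measurable_fun_nearest_index n
    (fun m => \int[P]_y (c (e m) (nearest_point n y))%:E)).
by move=> x _; exact: kernel_integral_nearest_point_cvg.
Qed.

Lemma kernel_integral_ge0 (P : {measure set T -> \bar R}) x :
  0 <= \int[P]_y (c x y)%:E.
Proof. by apply: integral_ge0 => y _; rewrite lee_fin. Qed.

Lemma kernel_integral_le (P : {finite_measure set T -> \bar R}) x :
  \int[P]_y (c x y)%:E <= (M * fine (P setT))%:E.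
Proof.
rewrite EFinM fineK ?fin_num_measure //.
apply: ge0_integral_le_cst; first exact: measurable_kernel.
by move=> y; rewrite !lee_fin c_ge0 c_le.
Qed.

Definition cross_energy (P P' : {finite_measure set T -> \bar R}) : R :=
  fine (\int[P]_x \int[P']_y (c x y)%:E).

Lemma cross_energyE (P P' : {finite_measure set T -> \bar R}) :
  \int[P]_x \int[P']_y (c x y)%:E = (cross_energy P P')%:E.
Proof.
rewrite fineK // ge0_fin_numE; last first.
  by apply: integral_ge0 => x _; exact: kernel_integral_ge0.
apply: (@le_lt_trans _ _ ((M * fine (P' setT))%:E * P setT)); last first.
  by rewrite ltey_eq fin_numM ?fin_num_measure.
apply: ge0_integral_le_cst; first exact: measurable_kernel_integral.
by move=> x; rewrite kernel_integral_ge0 kernel_integral_le.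
Qed.

Lemma nearest_energy_cvg (P P' : {finite_measure set T -> \bar R}) :
  \int[P]_x \int[P']_y (c (nearest_point n x) (nearest_point n y))%:E
    @[n --> \oo] --> (cross_energy P P')%:E.
Proof.
rewrite -cross_energyE.
apply: (@dominated_cvg _ _ _ P setT _ (fun n x =>
    \int[P']_y (c (nearest_point n x) (nearest_point n y))%:E)
  _ (cst (M * fine (P' setT))%:E)) => //.
- by move=> n; exact: (measurable_fun_nearest_index n
    (fun m => \int[P']_y (c (e m) (nearest_point n y))%:E)).
- by move=> x _; exact: kernel_integral_nearest_point_cvg.
- exact: finite_measure_integrable_cst.
- move=> n x _; rewrite gee0_abs; last by apply: integral_ge0 => y _; rewrite lee_fin.
  rewrite EFinM fineK ?fin_num_measure //.
  apply: ge0_integral_le_cst.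
    exact: (measurable_fun_nearest_index n (fun m => (c (nearest_point n x) (e m))%:E)).
  by move=> y; rewrite !lee_fin c_ge0 c_le.
Qed.

Definition nearest_mass (P : {finite_measure set T -> \bar R}) n (m : 'I_n.+1) : R :=
  fine (P [set x | nearest_index n x = m]).
Arguments nearest_mass : clear implicits.

Lemma nearest_massE (P : {finite_measure set T -> \bar R}) n (m : 'I_n.+1) :
  (P : {measure set T -> \bar R}) [set x | nearest_index n x = m] =
  (nearest_mass P n m)%:E.
Proof. by rewrite fineK // fin_num_measure //; exact: measurable_nearest_index_eq. Qed.

Lemma sum_nearest_mass (P : {finite_measure set T -> \bar R}) n :
  (\sum_m nearest_mass P n m)%R = fine (P setT).
Proof.
have := integral_nearest_index P n (fun=> lee01).
rewrite -[\int[P]_x 1]/(\int[P]_x cst 1 x) integral_cst // mul1e.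
under eq_bigr do rewrite mul1e nearest_massE.
by rewrite sumEFin => ->.
Qed.

Lemma nearest_energy_bform (P P' : {finite_measure set T -> \bar R}) n :
  \int[P]_x \int[P']_y (c (nearest_point n x) (nearest_point n y))%:E =
  (bform (fun i j : 'I_n.+1 => c (e i) (e j))
     (nearest_mass P n) (nearest_mass P' n))%:E.
Proof.
rewrite (integral_nearest_index P n
  (h := fun m => \int[P']_y (c (e m) (nearest_point n y))%:E)); last first.
  by move=> m; apply: integral_ge0 => y _; rewrite lee_fin.
rewrite -sumEFin; apply: eq_bigr => m _.
rewrite (integral_nearest_index P' n
  (h := fun m' => (c (e m) (e m'))%:E)); last by move=> m'; rewrite lee_fin.
rewrite nearest_massE -sumEFin ge0_sume_distrl; last first.
  by move=> i _; rewrite mule_ge0 ?lee_fin // measure_ge0.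
by apply: eq_bigr => m' _; rewrite nearest_massE -!EFinM; congr EFin; ring.
Qed.

Lemma bform_nearest_mass_cvg (P P' : {finite_measure set T -> \bar R}) :
  bform (fun i j : 'I_n.+1 => c (e i) (e j)) (nearest_mass P n) (nearest_mass P' n)
    @[n --> \oo] --> cross_energy P P'.
Proof.
under eq_fun do rewrite -[bform _ _ _]/(fine _%:E) -nearest_energy_bform.
exact/fine_cvg/nearest_energy_cvg.
Qed.

Definition signed_energy (P1 P2 : {finite_measure set T -> \bar R}) : R :=
  cross_energy P1 P1 + cross_energy P2 P2 - cross_energy P1 P2 - cross_energy P2 P1.

Lemma signed_energy_ge0 (Pm : R -> Prop) (P1 P2 : {finite_measure set T -> \bar R}) :
  psd_kernel Pm c -> Pm (fine (P1 setT) - fine (P2 setT))%R ->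
  (0 <= signed_energy P1 P2)%R.
Proof.
move=> c_psd Pm_mass.
pose a n i := (nearest_mass P1 n i - nearest_mass P2 n i)%R.
have a_cvg : bform (fun i j : 'I_n.+1 => c (e i) (e j)) (a n) (a n)
    @[n --> \oo] --> signed_energy P1 P2.
  under eq_fun do rewrite bformBB.
  by apply: cvgB; [apply: cvgB; [apply: cvgD|]|]; exact: bform_nearest_mass_cvg.
rewrite -(cvg_lim _ a_cvg) //; apply: limr_ge.
  by apply/cvg_ex; exists (signed_energy P1 P2).
apply: nearW => n; apply: c_psd.
by rewrite sumrB !sum_nearest_mass.
Qed.

Lemma Kfun_mixture (Q1 Q2 Q : {finite_measure set T -> \bar R}) (t : R) :
  (0 <= t <= 1)%R ->
  (forall A, measurable A -> Q A = t%:E * Q1 A + (1 - t)%:E * Q2 A) ->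
  Kfun c Q = (t ^+ 2 * cross_energy Q1 Q1
              + t * (1 - t) * (cross_energy Q1 Q2 + cross_energy Q2 Q1)
              + (1 - t) ^+ 2 * cross_energy Q2 Q2)%:E.
Proof.
move=> t01 hQ; rewrite /Kfun.
have mix_kernel (r : R) (P : {finite_measure set T -> \bar R}) :
    measurable_fun [set: T] (fun x => r%:E * \int[P]_y (c x y)%:E).
  by apply: measurable_funeM; exact: measurable_kernel_integral.
have t_ge0 : 0 <= t%:E by case/andP: t01; rewrite lee_fin.
have t1_ge0 : 0 <= (1 - t)%:E by case/andP: t01; rewrite lee_fin subr_ge0.
transitivity (\int[Q]_x (t%:E * \int[Q1]_y (c x y)%:E
                       + (1 - t)%:E * \int[Q2]_y (c x y)%:E)).
  apply: eq_integral => x _; apply: ge0_integral_mixture => //.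
    exact: measurable_kernel.
  by move=> y; rewrite lee_fin.
rewrite (ge0_integral_mixture t01 hQ); last 2 first.
- exact: emeasurable_funD.
- by move=> x; rewrite adde_ge0 // mule_ge0 // kernel_integral_ge0.
rewrite !ge0_integralD //; try exact: mix_kernel;
  try by move=> x _; rewrite mule_ge0 // kernel_integral_ge0.
rewrite !ge0_integralZl //; try exact: measurable_kernel_integral;
  try by move=> x _; exact: kernel_integral_ge0.
by rewrite !cross_energyE -!EFinM -!EFinD; congr EFin; ring.
Qed.

Lemma Kfun_mixture_signed_energy (Q1 Q2 Q : {finite_measure set T -> \bar R}) (t : R) :
  (0 <= t <= 1)%R ->
  (forall A, measurable A -> Q A = t%:E * Q1 A + (1 - t)%:E * Q2 A) ->
  t%:E * Kfun c Q1 + (1 - t)%:E * Kfun c Q2 =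
  Kfun c Q + (t * (1 - t) * signed_energy Q1 Q2)%:E.
Proof.
move=> t01 hQ; rewrite (Kfun_mixture t01 hQ) /Kfun !cross_energyE.
by rewrite -!EFinM -!EFinD /signed_energy; congr EFin; ring.
Qed.

Lemma Kfun_le_mixture_of_psd (Pm : R -> Prop)
    (Q1 Q2 Q : {finite_measure set T -> \bar R}) (t : R) :
  psd_kernel Pm c -> Pm (fine (Q1 setT) - fine (Q2 setT))%R -> (0 <= t <= 1)%R ->
  (forall A, measurable A -> Q A = t%:E * Q1 A + (1 - t)%:E * Q2 A) ->
  Kfun c Q <= t%:E * Kfun c Q1 + (1 - t)%:E * Kfun c Q2.
Proof.
move=> c_psd Pm_mass t01 hQ; rewrite (Kfun_mixture_signed_energy t01 hQ).
rewrite leeDl // lee_fin mulr_ge0 ?(signed_energy_ge0 c_psd) //.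
by case/andP: t01 => t0 t1; rewrite mulr_ge0 // subr_ge0.
Qed.

Lemma signed_energy_ge0_of_midpoint (Q1 Q2 Q : {finite_measure set T -> \bar R}) :
  (forall A, measurable A -> Q A = (1/2)%:E * Q1 A + (1 - 1/2)%:E * Q2 A) ->
  Kfun c Q <= (1/2)%:E * Kfun c Q1 + (1 - 1/2)%:E * Kfun c Q2 ->
  (0 <= signed_energy Q1 Q2)%R.
Proof.
have half01 : (0 <= (1/2 : R) <= 1)%R by apply/andP; split; lra.
move=> hQ; rewrite (Kfun_mixture_signed_energy half01 hQ) /Kfun cross_energyE.
by rewrite -EFinD lee_fin lerDl pmulr_rge0 //; lra.
Qed.

Lemma cross_energy_dirac_sum n (x : 'I_n -> T) (w w' : 'I_n -> R) :
  cross_energy (dirac_sum x w) (dirac_sum x w') =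
  bform (fun i j => c (x i) (x j)) (fun i => `|w i|)%R (fun j => `|w' j|)%R.
Proof.
apply: EFin_inj; rewrite -cross_energyE integral_dirac_sum; last 2 first.
- exact: measurable_kernel_integral.
- by move=> u; exact: kernel_integral_ge0.
rewrite -sumEFin; apply: eq_bigr => i _.
rewrite integral_dirac_sum; last 2 first.
- exact: measurable_kernel.
- by move=> v; rewrite lee_fin.
under eq_bigr do rewrite -EFinM.
by rewrite sumEFin -EFinM big_distrr; congr EFin; apply: eq_bigr => j _ /=; ring.
Qed.

Lemma signed_energy_dirac_sum n (x : 'I_n -> T) (w1 w2 : 'I_n -> R) :
  (forall i, 0 <= w1 i)%R -> (forall i, 0 <= w2 i)%R ->
  signed_energy (dirac_sum x w1) (dirac_sum x w2) =
  bform (fun i j => c (x i) (x j)) (fun i => w1 i - w2 i)%R (fun i => w1 i - w2 i)%R.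
Proof.
move=> w1_ge0 w2_ge0; rewrite bformBB /signed_energy !cross_energy_dirac_sum.
have abs_w1 : (fun i => `|w1 i|)%R = w1 by apply/funext => i; rewrite ger0_norm.
have abs_w2 : (fun i => `|w2 i|)%R = w2 by apply/funext => i; rewrite ger0_norm.
by rewrite abs_w1 abs_w2.
Qed.

Local Close Scope ereal_scope.

Lemma Kfun_convex_of_positive_definite :
  positive_definite c -> K_convex_on_finite_measures c.
Proof.
move=> /positive_definite_psd c_psd Q1 Q2 Q t t01 hQ.
exact: Kfun_le_mixture_of_psd c_psd _ t01 hQ.
Qed.

Lemma Kfun_convex_of_balanced_positive_definite :
  balanced_positive_definite c -> K_convex_on_probabilities c.
Proof.
move=> /balanced_positive_definite_psd c_psd Q1 Q2 Q t t01 hQ.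
apply: Kfun_le_mixture_of_psd c_psd _ t01 hQ.
apply/eqP; rewrite subr_eq0; apply/eqP; congr fine.
exact: etrans (probability_setT Q1) (esym (probability_setT Q2)).
Qed.

Lemma bform_ge0_of_Kfun_convex n (x : 'I_n -> T) (w1 w2 : 'I_n -> R) :
  K_convex_on_finite_measures c -> (forall i, 0 <= w1 i) -> (forall i, 0 <= w2 i) ->
  0 <= bform (fun i j => c (x i) (x j)) (fun i => w1 i - w2 i) (fun i => w1 i - w2 i).
Proof.
move=> Kconv w1_ge0 w2_ge0.
have half01 : 0 <= (1/2 : R) <= 1 by apply/andP; split; lra.
have hmix := dirac_sum_mixture x w1_ge0 w2_ge0 half01.
have := signed_energy_ge0_of_midpoint (fun A _ => hmix A)
  (Kconv _ _ _ _ half01 (fun A _ => hmix A)).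
by rewrite signed_energy_dirac_sum.
Qed.

Lemma bform_ge0_of_Kfun_convex_probabilities n (x : 'I_n -> T) (w1 w2 : 'I_n -> R) :
  K_convex_on_probabilities c -> (forall i, 0 <= w1 i) -> (forall i, 0 <= w2 i) ->
  \sum_i w1 i = 1 -> \sum_i w2 i = 1 ->
  0 <= bform (fun i j => c (x i) (x j)) (fun i => w1 i - w2 i) (fun i => w1 i - w2 i).
Proof.
move=> Kconv w1_ge0 w2_ge0 sum_w1 sum_w2.
have half01 : 0 <= (1/2 : R) <= 1 by apply/andP; split; lra.
have hmix := dirac_sum_mixture x w1_ge0 w2_ge0 half01.
have mass1 : dirac_sum x w1 setT = 1%:E by rewrite ge0_dirac_sum_setT ?sum_w1.
have mass2 : dirac_sum x w2 setT = 1%:E by rewrite ge0_dirac_sum_setT ?sum_w2.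
have mass_mix : dirac_sum x (fun i => 1/2 * w1 i + (1 - 1/2) * w2 i) setT = 1%:E.
  by rewrite hmix mass1 mass2 !mule1 -EFinD; congr EFin; lra.
pose P1 := dirac_sum_probability mass1; pose P2 := dirac_sum_probability mass2.
pose P := dirac_sum_probability mass_mix.
have := signed_energy_ge0_of_midpoint (Q1 := P1) (Q2 := P2) (Q := P)
  (fun A _ => hmix A) (Kconv P1 P2 P _ half01 (fun A _ => hmix A)).
by rewrite signed_energy_dirac_sum.
Qed.

Lemma positive_definite_of_Kfun_convex :
  K_convex_on_finite_measures c -> positive_definite c.
Proof.
move=> Kconv n x _ a.
have <- : (fun i => Num.max (a i) 0 - Num.max (- a i) 0) = a.
  by apply/funext => i; rewrite max0_sub_max0N.
by apply: (bform_ge0_of_Kfun_convex (x : 'I_n -> T)) => // i; rewrite le_max lexx orbT.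
Qed.

Lemma balanced_positive_definite_of_Kfun_convex :
  K_convex_on_probabilities c -> balanced_positive_definite c.
Proof.
move=> Kconv n x _ a a_bal.
pose w1 i := Num.max (a i) 0; pose w2 i := Num.max (- a i) 0.
have w1_ge0 i : 0 <= w1 i by rewrite le_max lexx orbT.
have w2_ge0 i : 0 <= w2 i by rewrite le_max lexx orbT.
have a_w i : a i = w1 i - w2 i by rewrite max0_sub_max0N.
pose s := \sum_i w1 i.
have sum_w2 : \sum_i w2 i = s.
  apply/eqP; rewrite eq_sym -subr_eq0 -sumrB.
  by rewrite -(eq_bigr _ (fun i _ => a_w i)) a_bal.
have /orP[/eqP s0|s_gt0] : (s == 0) || (0 < s) by rewrite -le0r sumr_ge0.
  have w1_0 i : w1 i = 0 by apply: (psumr_eq0P _ s0).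
  have w2_0 i : w2 i = 0 by apply: (psumr_eq0P _ (etrans sum_w2 s0)).
  rewrite /bform big1 // => i _; rewrite big1 // => j _.
  by rewrite a_w w1_0 w2_0 subrr mulr0 mul0r.
have s_inv_ge0 : 0 <= s^-1 by rewrite invr_ge0 ltW.
have sum_scaled (w : 'I_n -> R) : \sum_i w i = s -> \sum_i s^-1 * w i = 1.
  by move=> sum_w; rewrite -big_distrr /= sum_w mulVf ?gt_eqF.
have := bform_ge0_of_Kfun_convex_probabilities (x : 'I_n -> T) Kconv
  (fun i => mulr_ge0 s_inv_ge0 (w1_ge0 i)) (fun i => mulr_ge0 s_inv_ge0 (w2_ge0 i))
  (sum_scaled _ erefl) (sum_scaled _ sum_w2).
have -> : (fun i => s^-1 * w1 i - s^-1 * w2 i) = (fun i => s^-1 * a i).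
  by apply/funext => i; rewrite a_w mulrBr.
by rewrite bformZZ pmulr_rge0 // exprn_gt0 // invr_gt0.
Qed.

Lemma positive_definite_iff_Kfun_convex :
  (positive_definite c <-> K_convex_on_finite_measures c) /\
  (balanced_positive_definite c <-> K_convex_on_probabilities c).
Proof.
split; split.
- exact: Kfun_convex_of_positive_definite.
- exact: positive_definite_of_Kfun_convex.
- exact: Kfun_convex_of_balanced_positive_definite.
- exact: balanced_positive_definite_of_Kfun_convex.
Qed.

End kernel.

End separable_metric_space.

Lemma separable_dense_seq (R : realType) (X : ptopologicalType) (dist : X -> X -> R) :
  is_metric dist ->
  (forall A : set X, open A <->
    (forall x, A x -> exists2 r : R, 0 < r & [set y | dist x y < r] `<=` A)) ->
  separable_space X ->
  exists e : nat -> X, forall x (r : R), 0 < r -> exists m, dist x (e m) < r.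
Proof.
move=> [_ dist0 _ dist_tri] open_dist [D [D_count D_dense]].
have /pcard_surjP [e e_surj] := D_count.
exists e => x r r_gt0.
have ball_open : open [set y | dist x y < r].
  apply/open_dist => z xz; exists (r - dist x z); first by rewrite subr_gt0.
  by move=> y /= zy; have := dist_tri x z y; lra.
have [|z [xz Dz]] := D_dense _ _ ball_open.
  by exists x => /=; rewrite (dist0 x x).2.
by have [m _ em] := e_surj z Dz; exists m; rewrite em.
Qed.

Unset Implicit Arguments.
Theorem lemma3p3 (R : realType) (X : ptopologicalType) (c : X -> X -> R) :
  polish_space R X ->
  continuous (fun p : X * X => c p.1 p.2) ->
  (exists M : R, forall x y, c x y <= M) ->
  (forall x y, 0 <= c x y) ->
  (forall x y, c x y = c y x) ->
  (positive_definite c <-> K_convex_on_finite_measures c) /\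
  (balanced_positive_definite c <-> K_convex_on_probabilities c).
Proof.
move=> [X_sep [dist [dist_metric open_dist _]]] c_cont [M c_le] c_ge0 _.
have [e dense_seq] := separable_dense_seq dist_metric open_dist X_sep.
exact: (positive_definite_iff_Kfun_convex dist_metric open_dist dense_seq
  c_cont c_le c_ge0).
Qed.
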